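(* Assume the standing conventions of the context and suppose $\mathcal D_{Z,Z'}\neq\emptyset$. Let $\Lambda\in\overline{\mathcal S}_Z$ and $\Lambda'\in\overline{\mathcal S}_{Z'}$. (i) If $\Psi'$ is a consecutive pair in $Z'_{\mathrm I}$ with $(Z,\Lambda_{\Psi'})\in\mathcal D_{Z,Z'}$, then $(\Lambda,\Lambda')\in\overline{\mathcal B}^+_{Z,Z'}$ if and only if $(\Lambda,\Lambda'+\Lambda_{\Psi'})\in\overline{\mathcal B}^+_{Z,Z'}$. (ii) If $\Psi$ is a consecutive pair in $Z_{\mathrm I}$ with $(\Lambda_\Psi,Z')\in\mathcal D_{Z,Z'}$, then $(\Lambda,\Lambda')\in\overline{\mathcal B}^+_{Z,Z'}$ if and only if $(\Lambda+\Lambda_{\Psi},\Lambda')\in\overline{\mathcal B}^+_{Z,Z'}$.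
   Context: A symbol is an array $\Lambda=\binom{a'_1,\ldots,a'_{m_1}}{b'_1,\ldots,b'_{m_2}}$ of two strictly decreasing finite sequences of nonnegative integers (top row, bottom row); its defect is $\mathrm{def}(\Lambda)=m_1-m_2$. Standing assumptions: $Z=\binom{a_1,\ldots,a_{m+1}}{b_1,\ldots,b_m}$ is a special symbol of defect $1$, i.e. $a_1\ge b_1\ge a_2\ge b_2\ge\cdots\ge b_m\ge a_{m+1}$; $Z'=\binom{c_1,\ldots,c_{m'}}{d_1,\ldots,d_{m'}}$ is a special symbol of defect $0$, i.e. $c_1\ge d_1\ge c_2\ge d_2\ge\cdots\ge c_{m'}\ge d_{m'}$; and $m'\in\{m,m+1\}$. For a symbol $Y$, $Y_{\mathrm I}$ is the set of entries of $Y$ occurring in exactly one row. For $M\subset Z_{\mathrm I}$, $\Lambda_M$ is the symbol obtained from $Z$ by moving every entry of $M$ to the other row (rows re-sorted decreasingly); for $N\subset Z'_{\mathrm I}$, $\Lambda_N$ is obtained from $Z'$ in the same way. $\overline{\mathcal S}_Z=\{\Lambda_M: M\subset Z_{\mathrm I}\}$, $\overline{\mathcal S}_{Z'}=\{\Lambda_N:N\subset Z'_{\mathrm I}\}$; $\mathcal S_{Z,1}$ (resp. $\mathcal S_{Z',0}$) is the set of elements of $\overline{\mathcal S}_Z$ of defect $1$ (resp. of $\overline{\mathcal S}_{Z'}$ of defect $0$). Sum: $\Lambda_{M_1}+\Lambda_{M_2}:=\Lambda_{(M_1\cup M_2)\smallsetminus(M_1\cap M_2)}$ (for subsets of $Z_{\mathrm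 I}$, and likewise of $Z'_{\mathrm I}$). A consecutive pair in $Z'_{\mathrm I}$ is a two-element subset $\{c_k,d_l\}\subset Z'_{\mathrm I}$, written $\binom{c_k}{d_l}$, with $l\in\{k-1,k\}$; a consecutive pair in $Z_{\mathrm I}$ is $\{a_k,b_l\}\subset Z_{\mathrm I}$, written $\binom{a_k}{b_l}$, with $l\in\{k-1,k\}$. Relation $\overline{\mathcal B}^+_{Z,Z'}\subset\overline{\mathcal S}_Z\times\overline{\mathcal S}_{Z'}$: for $\Lambda=\binom{a'_1,\ldots,a'_{m_1}}{b'_1,\ldots,b'_{m_2}}\in\overline{\mathcal S}_Z$ and $\Lambda'=\binom{c'_1,\ldots,c'_{m'_1}}{d'_1,\ldots,d'_{m'_2}}\in\overline{\mathcal S}_{Z'}$, $(\Lambda,\Lambda')\in\overline{\mathcal B}^+_{Z,Z'}$ iff $\mathrm{def}(\Lambda')=1-\mathrm{def}(\Lambda)$ and: if $m'=m$, $a'_i>d'_i\ge a'_{i+1}$ for $1\le i\le m'_2$ and $b'_{i-1}>c'_i\ge b'_i$ for $1\le i\le m'_1$; if $m'=m+1$, $a'_i\ge d'_i>a'_{i+1}$ for $1\le i\le m'_2$ and $b'_{i-1}\ge c'_i>b'_i$ for $1\le i\le m'_1$; here $b'_0=+\infty$ and nonexistent entries $a'_j,b'_j$ beyond the row lengths are $-\infty$. Then $\mathcal D_{Z,Z'}=\overline{\mathcal B}^+_{Z,Z'}\cap(\mathcal S_{Z,1}\times\mathcal S_{Z',0})$. *)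

From mathcomp Require Import all_boot all_order all_algebra.
Set Implicit Arguments. Unset Strict Implicit. Unset Printing Implicit Defensive.
Import GRing.Theory Num.Theory.

(* A symbol (top row, bottom row); rows are lists of nats, listed decreasingly. *)
Definition symbol := (seq nat * seq nat)%type.

(* 1-based entries: ent s i = s_i for 1 <= i <= size s. *)
Definition ent (s : seq nat) (i : nat) : nat := nth 0 s i.-1.
Definition has_ent (s : seq nat) (i : nat) : bool := (0 < i) && (i <= size s).

(* Comparisons with the convention that nonexistent entries are -infinity. *)
Definition ent_gt (s : seq nat) i x := has_ent s i && (x < ent s i).
Definition ent_ge (s : seq nat) i x := has_ent s i && (x <= ent s i).
Definition ent_le (s : seq nat) i x := ~~ has_ent s i || (ent s i <= x).
Definition ent_lt (s : seq nat) i x := ~~ has_ent s i || (ent s i < x).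

Definition strict_decr (s : seq nat) : bool := sorted (fun x y => y < x) s.

(* Z = (a ; b) special of defect 1 with m = size b. *)
Definition special_def1 (a b : seq nat) : Prop :=
  [/\ strict_decr a, strict_decr b, size a = (size b).+1 &
      forall i, 1 <= i <= size b -> ent b i <= ent a i /\ ent a i.+1 <= ent b i].

Definition special_def0 (c d : seq nat) : Prop :=
  [/\ strict_decr c, strict_decr d, size c = size d &
      forall i, 1 <= i <= size d -> ent d i <= ent c i /\ ent c i.+1 <= ent d i].

Definition defect (L : symbol) : int := (size L.1)%:Z - (size L.2)%:Z.

Definition singles (Y : symbol) : pred nat :=
  fun x => (x \in Y.1) != (x \in Y.2).


Definition move (M : pred nat) (Y : symbol) : symbol :=
  (sort (fun x y => y <= x) ([seq x <- Y.1 | ~~ M x] ++ [seq x <- Y.2 | M x]),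
   sort (fun x y => y <= x) ([seq x <- Y.2 | ~~ M x] ++ [seq x <- Y.1 | M x])).

(* symmetric difference; Lambda_{M1} + Lambda_{M2} = Lambda_{symdiff M1 M2} *)
Definition symdiff (M1 M2 : pred nat) : pred nat := fun x => M1 x (+) M2 x.

Definition in_Sbar (Y L : symbol) : Prop :=
  exists M : pred nat, subpred M (singles Y) /\ L = move M Y.

Definition Bplus (m m' : nat) (L L' : symbol) : Prop :=
  let: (a', b') := L in let: (c', d') := L' in
  defect L' = (1 - defect L)%R /\
  if m' == m then
    (forall i, 1 <= i <= size d' ->
        ent_gt a' i (ent d' i) && ent_le a' i.+1 (ent d' i)) /\
    (forall i, 1 <= i <= size c' ->
        ((i == 1) || ent_gt b' i.-1 (ent c' i)) && ent_le b' i (ent c' i))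
  else if m' == m.+1 then
    (forall i, 1 <= i <= size d' ->
        ent_ge a' i (ent d' i) && ent_lt a' i.+1 (ent d' i)) /\
    (forall i, 1 <= i <= size c' ->
        ((i == 1) || ent_ge b' i.-1 (ent c' i)) && ent_lt b' i (ent c' i))
  else False.

Definition BplusZ (a b c d : seq nat) (L L' : symbol) : Prop :=
  Bplus (size b) (size c) L L'.

Definition inD (a b c d : seq nat) (L L' : symbol) : Prop :=
  [/\ in_Sbar (a, b) L, defect L = (1%:Z)%R, in_Sbar (c, d) L', defect L' = (0%:Z)%R &
      BplusZ a b c d L L'].

Definition cons_pair (a b : seq nat) (P : pred nat) : Prop :=
  exists k l, [/\ has_ent a k && has_ent b l, (l == k.-1) || (l == k),
    singles (a, b) (ent a k), singles (a, b) (ent b l) &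
    P =1 pred2 (ent a k) (ent b l)].

From mathcomp Require Import all_boot all_order all_algebra zify.
Set Implicit Arguments. Unset Strict Implicit. Unset Printing Implicit Defensive.

(* Code the entries of the symbols on one side by odd numbers and those on the
   other side by even numbers (which side is odd depends on whether m' = m or
   m' = m + 1): every comparison in the definition of bar B^+ then becomes a
   strict comparison of distinct codes.  Counting, for each threshold t, the
   codes above t in each row, (Lambda, Lambda') lies in bar B^+ iff the defect
   condition holds and the top row of Lambda interlaces with the bottom row of
   Lambda', and the top row of Lambda' with the bottom row of Lambda: one
   count equals the other or exceeds it by one, at every threshold
   ([Bplus_coded]).

   Let Psi' = {u, v} with codes lo < hi.  Special symbols have no entry
   strictly between the two entries of a consecutive pair
   ([consecutive_gap]).  Since (Z, Lambda_Psi') is related, Z (hence every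
   Lambda) has no code in [lo, hi] at all ([Bcount_swap_gap]).  Toggling Psi'
   only alters the counts of the rows of Lambda' on thresholds in [lo, hi),
   where the counts of Lambda are constant; there either both sides fail, or
   the counts before and after the toggle take the same two values, so the
   interlacing conditions are unaffected ([Bcount_swap]).  Part (ii) is part
   (i) with the roles of the two symbols exchanged ([Bcoded_sym]). *)

Lemma gtn_trans : transitive (fun x y : nat => y < x).
Proof. by move=> x y z Hyx Hzy; exact: ltn_trans Hzy Hyx. Qed.

Lemma strict_decr_uniq s : strict_decr s -> uniq s.
Proof. by apply: sorted_uniq; [exact: gtn_trans | move=> x /=; rewrite ltnn]. Qed.

Lemma ent_mem s i : has_ent s i -> ent s i \in s.
Proof. by case: i => // i /andP[_ Hi]; exact: mem_nth. Qed.

Lemma ent_index s v : v \in s -> exists2 i, has_ent s i & v = ent s i.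
Proof.
by move=> Hv; exists (index v s).+1; rewrite /has_ent /ent /= ?index_mem ?nth_index.
Qed.

Lemma ent_decr s i j : strict_decr s -> 0 < i -> i <= j -> j <= size s ->
  ent s j <= ent s i.
Proof.
move=> Hs i0 ij jS; rewrite /ent; case: (ltngtP i j) ij => // [lt_ij _|-> //].
apply/ltnW/(sorted_ltn_nth gtn_trans 0 Hs); rewrite ?inE; lia.
Qed.

Lemma count_prefix (p : pred nat) s i : strict_decr s ->
  (forall v w, v <= w -> p v -> p w) -> 0 < i ->
  (i <= count p s) = has_ent s i && p (ent s i).
Proof.
move=> + p_up; elim: s i => [|h t IH] [|i] //= Hs _.
have St : strict_decr t := path_sorted Hs.
have lt_h : all (fun v => v < h) t := order_path_min gtn_trans Hs.
have [ph | nph] := boolP (p h).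
  case: i => [|i]; first by rewrite /ent /= ph.
  by rewrite add1n ltnS IH.
have pt_false v : v \in t -> p v = false.
  move=> vt; apply/negbTE/negP => pv; case/negP: nph.
  by apply: p_up pv; apply/ltnW/(allP lt_h).
have -> : count p t = 0.
  by apply/eqP; rewrite -leqn0 leqNgt -has_count; apply/hasP => -[v /pt_false ->].
rewrite leqn0 /has_ent /ent /=; case: i => [|i] /=; first by rewrite (negbTE nph).
case: (ltnP i (size t)) => Hi; last by rewrite ltnS ltnNge Hi.
by rewrite pt_false ?andbF // mem_nth.
Qed.

Definition above (f : nat -> nat) (s : seq nat) (t : nat) : nat :=
  count (fun v => t < f v) s.

Definition interlaced (g f : nat -> nat) : Prop := forall t, f t <= g t <= (f t).+1.

Lemma above_up f t : {mono f : u v / u < v} -> forall v w, v <= w -> t < f v -> t < f w.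
Proof.
by move=> f_mono v w; rewrite -(leq_mono (mono2W f_mono)) => le_fvw /leq_trans; apply.
Qed.

(* Two strictly decreasing sequences X, Y, coded by increasing maps fX, fY,
   interlace as fX(X_1) > fY(Y_1) > fX(X_2) > fY(Y_2) > ... exactly when their
   threshold counts are interlaced. *)
Section Interlacing.
Variables fX fY : nat -> nat.
Hypothesis fX_mono : {mono fX : u v / u < v}.
Hypothesis fY_mono : {mono fY : u v / u < v}.

Lemma interlaced_of_le X Y : strict_decr X -> strict_decr Y ->
  (forall i, 0 < i <= size Y -> has_ent X i && (fY (ent Y i) <= fX (ent X i))) ->
  (forall i, 1 < i <= size X -> has_ent Y i.-1 && (fX (ent X i) <= fY (ent Y i.-1))) ->
  interlaced (above fX X) (above fY Y).
Proof.
move=> sX sY YX XY t.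
have cntX := count_prefix sX (above_up (t := t) fX_mono).
have cntY := count_prefix sY (above_up (t := t) fY_mono).
apply/andP; split.
  case En: (above fY Y t) => [|i] //.
  have /andP[Yi tY] : has_ent Y i.+1 && (t < fY (ent Y i.+1)) by rewrite -cntY // -En.
  have /andP[Xi le_YX] := YX i.+1 Yi.
  by rewrite /above cntX // Xi (leq_trans tY le_YX).
rewrite leqNgt; apply/negP => lt_YX.
set j := above fX X t in lt_YX.
have /andP[Xj tX] : has_ent X j && (t < fX (ent X j)) by rewrite -cntX ?leqnn //; lia.
have /andP[Yj le_XY] : has_ent Y j.-1 && (fX (ent X j) <= fY (ent Y j.-1)).
  by apply: XY; case/andP: Xj => _ ->; rewrite andbT; lia.
have : j.-1 <= above fY Y t by rewrite /above cntY ?Yj ?(leq_trans tX le_XY) //; lia.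
lia.
Qed.

Hypothesis fXY_neq : forall u v, fX u != fY v.
Hypothesis fX_pos : forall v, 0 < fX v.
Hypothesis fY_pos : forall v, 0 < fY v.

(* Conversely, for distinct positive codes, interlaced counts force the strict
   inequalities, taking the threshold just below the relevant code. *)
Lemma lt_of_interlaced X Y : strict_decr X -> strict_decr Y ->
  interlaced (above fX X) (above fY Y) ->
  (forall i, 0 < i <= size Y -> has_ent X i && (fY (ent Y i) < fX (ent X i))) /\
  (forall i, 1 < i <= size X -> has_ent Y i.-1 && (fX (ent X i) < fY (ent Y i.-1))).
Proof.
move=> sX sY XY; split=> i /andP[i0 iS].
- set t := (fY (ent Y i)).-1.
  have tY : t < fY (ent Y i) by rewrite ltn_predL.
  have iY : i <= above fY Y t.
    by rewrite /above (count_prefix sY (above_up (t := t) fY_mono)) // /has_ent i0 iS tY.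
  have /andP[YX _] := XY t.
  move: (leq_trans iY YX); rewrite /above (count_prefix sX (above_up (t := t) fX_mono)) //.
  by case/andP=> -> /=; rewrite /t prednK ?fY_pos // ltn_neqAle eq_sym fXY_neq.
- set t := (fX (ent X i)).-1.
  have tX : t < fX (ent X i) by rewrite ltn_predL.
  have iX : i <= above fX X t.
    by rewrite /above (count_prefix sX (above_up (t := t) fX_mono)) ?/has_ent ?(ltnW i0) ?iS ?tX.
  have /andP[_ XY1] := XY t.
  have : i.-1 <= above fY Y t by lia.
  rewrite /above (count_prefix sY (above_up (t := t) fY_mono)); last lia.
  by case/andP=> -> /=; rewrite /t prednK ?fX_pos // ltn_neqAle fXY_neq.
Qed.

Lemma interlaced_iff_upper X Y : strict_decr X -> strict_decr Y -> size X <= (size Y).+1 ->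
  interlaced (above fX X) (above fY Y) <->
  (forall i, 0 < i <= size Y ->
     (has_ent X i && (fY (ent Y i) < fX (ent X i))) &&
     (~~ has_ent X i.+1 || (fX (ent X i.+1) < fY (ent Y i)))).
Proof.
move=> sX sY sXY; split.
  case/(lt_of_interlaced sX sY) => YX XY i iY; rewrite YX //=.
  case Xi: (has_ent X i.+1) => //=.
  have /andP[_ ->] // : has_ent Y i.+1.-1 && (fX (ent X i.+1) < fY (ent Y i.+1.-1)).
  by apply: XY; move: Xi iY; rewrite /has_ent; lia.
move=> H; apply: interlaced_of_le => // i iS.
  by case/andP: (H i iS) => /andP[-> /ltnW].
have iY : 0 < i.-1 <= size Y by lia.
have Xi : has_ent X i.-1.+1 by rewrite prednK /has_ent; lia.
case/andP: (H i.-1 iY) => _; rewrite Xi /= prednK; last lia.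
by move/ltnW ->; rewrite andbT /has_ent.
Qed.

Lemma interlaced_iff_lower X Y : strict_decr X -> strict_decr Y -> size Y <= size X ->
  interlaced (above fX X) (above fY Y) <->
  (forall i, 0 < i <= size X ->
     ((i == 1) || (has_ent Y i.-1 && (fX (ent X i) < fY (ent Y i.-1)))) &&
     (~~ has_ent Y i || (fY (ent Y i) < fX (ent X i)))).
Proof.
move=> sX sY sYX; split.
  case/(lt_of_interlaced sX sY) => YX XY i iX; apply/andP; split.
    by case: (eqVneq i 1) => //= i1; apply: XY; lia.
  by case Yi: (has_ent Y i) => //=; case/andP: (YX i Yi).
move=> H; apply: interlaced_of_le => // i iS.
  have Xi : has_ent X i by rewrite /has_ent; lia.
  by case/andP: (H i Xi) => _; rewrite Xi /has_ent iS => /ltnW.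
have iX : 0 < i <= size X by lia.
by case/andP: (H i iX) => /orP[/eqP i1|/andP[-> /ltnW ->]] //; lia.
Qed.

End Interlacing.

(* Codes separating the entries of the two symbols: odd numbers on one side,
   even numbers on the other.  They turn the mixed strict/weak comparisons of
   [Bplus] into strict comparisons of codes. *)
Definition odd_code (v : nat) : nat := v.*2.+1.
Definition even_code (v : nat) : nat := v.*2.+2.

Lemma odd_code_mono : {mono odd_code : u v / u < v}.
Proof. by move=> u v; rewrite /odd_code; apply/idP/idP; lia. Qed.

Lemma even_code_mono : {mono even_code : u v / u < v}.
Proof. by move=> u v; rewrite /even_code; apply/idP/idP; lia. Qed.

Lemma odd_even_neq u v : odd_code u != even_code v.
Proof. by rewrite /odd_code /even_code; apply/eqP; lia. Qed.

Lemma even_odd_neq u v : even_code u != odd_code v.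
Proof. by rewrite eq_sym odd_even_neq. Qed.

Lemma odd_lt_even u v : (odd_code u < even_code v) = (u <= v).
Proof. by rewrite /odd_code /even_code; apply/idP/idP; lia. Qed.

Lemma even_lt_odd u v : (even_code u < odd_code v) = (u < v).
Proof. by rewrite /odd_code /even_code; apply/idP/idP; lia. Qed.

Definition codeZ (m m' : nat) : nat -> nat := if m' == m then odd_code else even_code.
Definition codeZ' (m m' : nat) : nat -> nat := if m' == m then even_code else odd_code.

Lemma codeZ_mono m m' : {mono codeZ m m' : u v / u < v}.
Proof. by rewrite /codeZ; case: ifP => _; [exact: odd_code_mono | exact: even_code_mono]. Qed.

Lemma codeZ'_mono m m' : {mono codeZ' m m' : u v / u < v}.
Proof. by rewrite /codeZ'; case: ifP => _; [exact: even_code_mono | exact: odd_code_mono]. Qed.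

Lemma codeZ_neq m m' u v : codeZ m m' u != codeZ' m m' v.
Proof. by rewrite /codeZ /codeZ' /odd_code /even_code; case: ifP => _; apply/eqP; lia. Qed.

Lemma codeZ'_neq m m' u v : codeZ' m m' u != codeZ m m' v.
Proof. by rewrite eq_sym codeZ_neq. Qed.

Lemma codeZ_pos m m' v : 0 < codeZ m m' v.
Proof. by rewrite /codeZ; case: ifP. Qed.

Lemma codeZ'_pos m m' v : 0 < codeZ' m m' v.
Proof. by rewrite /codeZ'; case: ifP. Qed.

Lemma codeZ_le m m' v : codeZ m m' v <= v.*2.+2.
Proof. by rewrite /codeZ /odd_code /even_code; case: ifP. Qed.

Lemma codeZ'_le m m' v : codeZ' m m' v <= v.*2.+2.
Proof. by rewrite /codeZ' /odd_code /even_code; case: ifP. Qed.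

(* The relation bar B^+ in terms of the threshold counts fA, fB of the rows
   of Lambda and fC, fD of those of Lambda' (at threshold 0 they are the row
   lengths): the defect condition, and the interlacing of the top row of
   Lambda with the bottom row of Lambda' and of the top row of Lambda' with
   the bottom row of Lambda. *)
Definition Bcount (fA fB fC fD : nat -> nat) : Prop :=
  [/\ fC 0 + fA 0 = (fD 0 + fB 0).+1, interlaced fA fD & interlaced fC fB].

Lemma above0 f s : (forall v, 0 < f v) -> above f s 0 = size s.
Proof. by move=> f_pos; rewrite /above -[RHS]count_predT; apply: eq_count => v; rewrite f_pos. Qed.

Lemma iff_under_defect (D D' R1 R2 I1 I2 : Prop) :
  (D <-> D') -> (D' -> (R1 /\ R2 <-> I1 /\ I2)) -> (D /\ R1 /\ R2 <-> [/\ D', I1 & I2]).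
Proof.
move=> DD' RI; split=> [[/DD' d /(RI d) []] | [d i1 i2]] //.
by split; [exact/DD' | apply/(RI d)].
Qed.

(* Sizes and defect force |a'| = |d'| + 1, |b'| = |c'|
   when m' = m, and |a'| = |d'|, |c'| = |b'| + 1 when m' = m + 1: exactly what
   the two readings of interlacing need. *)
Lemma Bplus_count m m' a' b' c' d' : (m' = m \/ m' = m.+1) ->
  strict_decr a' -> strict_decr b' -> strict_decr c' -> strict_decr d' ->
  size a' + size b' = (m + m).+1 -> size c' + size d' = m' + m' ->
  Bplus m m' (a', b') (c', d') <->
  Bcount (above (codeZ m m') a') (above (codeZ m m') b')
         (above (codeZ' m m') c') (above (codeZ' m m') d').
Proof.
move=> Hm sa sb sc sd Sab Scd.
rewrite /Bplus /Bcount !(above0 _ (codeZ_pos m m')) !(above0 _ (codeZ'_pos m m')).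
case: Hm => Em; subst m'; rewrite /codeZ /codeZ' ?eqxx ?(gtn_eqF (ltnSn m)).
all: refine (iff_under_defect _ (fun def => _));
  [by rewrite /defect /=; split=> ?; lia | ].
- have [sizeA sizeB] : size a' = (size d').+1 /\ size b' = size c' by lia.
  rewrite (interlaced_iff_upper odd_code_mono even_code_mono odd_even_neq) ?sizeA //.
  rewrite (interlaced_iff_lower even_code_mono odd_code_mono even_odd_neq) ?sizeB //.
  by setoid_rewrite even_lt_odd; setoid_rewrite odd_lt_even.
- have [sizeA sizeB] : size a' = size d' /\ size c' = (size b').+1 by lia.
  rewrite (interlaced_iff_upper even_code_mono odd_code_mono even_odd_neq) ?sizeA //.
  rewrite (interlaced_iff_lower odd_code_mono even_code_mono odd_even_neq) ?sizeB //.
  by setoid_rewrite even_lt_odd; setoid_rewrite odd_lt_even.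
Qed.

Section Universe.
Variable K : nat.

Definition cnt (F : pred nat) (t : nat) : nat :=
  count (fun w => F w && (t < w)) (iota 0 K).

Lemma cnt_eq_above F F' t : (forall w, t < w -> F w = F' w) -> cnt F t = cnt F' t.
Proof. by move=> FF'; apply: eq_count => w; case: (ltnP t w) => tw; rewrite ?andbF ?FF'. Qed.

Lemma cnt_ext F F' : F =1 F' -> cnt F =1 cnt F'.
Proof. by move=> FF' t; apply: cnt_eq_above => w _; exact: FF'. Qed.

Lemma cnt_split F t1 t2 : t1 <= t2 ->
  cnt F t1 = cnt F t2 + count (fun w => F w && (t1 < w <= t2)) (iota 0 K).
Proof.
move=> t12; rewrite -count_predUI [X in _ = _ + X](@eq_count _ _ pred0) ?count_pred0.
  by rewrite addn0; apply: eq_count => w /=; case: (F w) => //=; apply/idP/idP; lia.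
by move=> w /=; case: (F w) => //=; apply/negP; lia.
Qed.

Lemma cnt_mono F t1 t2 : t1 <= t2 -> cnt F t2 <= cnt F t1.
Proof. by move=> t12; rewrite (cnt_split F t12) leq_addr. Qed.

Lemma cnt_jump F t1 t2 (ws : seq nat) : t1 <= t2 -> uniq ws -> all (fun w => w < K) ws ->
  (forall w, t1 < w <= t2 -> F w = (w \in ws)) -> (forall w, w \in ws -> t1 < w <= t2) ->
  cnt F t1 = cnt F t2 + size ws.
Proof.
move=> t12 u_ws ws_K Fws ws_in; rewrite (cnt_split F t12); congr addn.
rewrite (eq_count (a2 := mem ws)); last first.
  move=> w /=; case: (boolP (t1 < w <= t2)) => [/Fws -> | out]; rewrite ?andbT ?andbF //.
  by apply/esym/negP => /ws_in; apply/negP.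
rewrite -size_filter; apply/perm_size/uniq_perm; rewrite ?filter_uniq ?iota_uniq //.
by move=> w; rewrite mem_filter mem_iota /= andb_idr // => /(allP ws_K).
Qed.

Lemma cnt_flat_inv F t1 t2 w : cnt F t1 = cnt F t2 -> t1 < w <= t2 -> w < K -> ~~ F w.
Proof.
move=> E w_in wK; apply/negP => Fw.
have t12 : t1 <= t2 by lia.
have : 0 < count (fun w => F w && (t1 < w <= t2)) (iota 0 K).
  by rewrite -has_count; apply/hasP; exists w; rewrite ?mem_iota ?Fw.
by move: E; rewrite (cnt_split F t12); lia.
Qed.

Lemma cnt_window F lo hi : 0 < lo -> lo < hi -> hi < K ->
  (forall w, lo < w < hi -> ~~ F w) ->
  forall t, lo.-1 <= t <= hi -> cnt F t = cnt F hi + (F lo && (t < lo)) + (F hi && (t < hi)).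
Proof.
move=> lo0 lohi hiK Fmid t /andP[t1 t2].
rewrite (cnt_jump (t2 := hi) (ws := [seq w <- [:: lo; hi] | F w && (t < w)])) //.
- by rewrite size_filter /= addn0 addnA.
- by rewrite filter_uniq //= inE ltn_eqF.
- by apply/allP => w; rewrite mem_filter !inE => /andP[_ /orP[] /eqP->]; lia.
- move=> w /andP[tw wh]; rewrite mem_filter !inE tw andbT.
  have [->|nlo] := eqVneq w lo; first by rewrite /= andbT.
  have [->|nhi] := eqVneq w hi; first by rewrite orbT andbT.
  by rewrite /= andbF; apply/negbTE/Fmid; lia.
- by move=> w; rewrite mem_filter !inE => /andP[/andP[_ ->] /orP[] /eqP->]; lia.
Qed.

Lemma cnt_eq_below F F' t t0 : t <= t0 -> cnt F t0 = cnt F' t0 ->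
  (forall w, t < w <= t0 -> F w = F' w) -> cnt F t = cnt F' t.
Proof.
move=> tt0 E FF'; rewrite (cnt_split F tt0) (cnt_split F' tt0) E; congr addn.
by apply: eq_count => w; case: (boolP (t < w <= t0)) => [/FF'->|]; rewrite ?andbF.
Qed.

End Universe.

Lemma rel_window (Phi : nat -> nat -> Prop) (g f f' : nat -> nat) lo hi :
  0 < lo -> lo <= hi ->
  (forall t, lo.-1 <= t <= hi -> g t = g hi) ->
  (forall t, (t < lo) || (hi <= t) -> f' t = f t) ->
  (forall t, lo.-1 <= t <= hi -> f' t = f' hi \/ f' t = f' lo.-1) ->
  (forall t, Phi (g t) (f t)) -> forall t, Phi (g t) (f' t).
Proof.
move=> lo0 lohi g_flat f_out f'_win Hf t.
have [win | out] := boolP (lo.-1 <= t <= hi); last by rewrite f_out //; lia.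
rewrite (g_flat t win); case: (f'_win t win) => ->.
  by rewrite f_out ?leqnn ?orbT.
by rewrite f_out -?(g_flat lo.-1) //; lia.
Qed.

Lemma rel_window_iff (Phi : nat -> nat -> Prop) (g f f' : nat -> nat) lo hi :
  0 < lo -> lo <= hi ->
  (forall t, lo.-1 <= t <= hi -> g t = g hi) ->
  (forall t, (t < lo) || (hi <= t) -> f' t = f t) ->
  (forall t, lo.-1 <= t <= hi -> f t = f hi \/ f t = f lo.-1) ->
  (forall t, lo.-1 <= t <= hi -> f' t = f' hi \/ f' t = f' lo.-1) ->
  (forall t, Phi (g t) (f t)) <-> (forall t, Phi (g t) (f' t)).
Proof.
move=> lo0 lohi g_flat f_out f_win f'_win.
have f_out' t : (t < lo) || (hi <= t) -> f t = f' t by move/f_out.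
by split; [exact: rel_window f_out f'_win | exact: rel_window f_out' f_win].
Qed.

Lemma Bcount_iff fA fB fC fD fC' fD' :
  fC' 0 = fC 0 -> fD' 0 = fD 0 ->
  (interlaced fA fD <-> interlaced fA fD') -> (interlaced fC fB <-> interlaced fC' fB) ->
  Bcount fA fB fC fD <-> Bcount fA fB fC' fD'.
Proof.
by move=> C0 D0 AD CB; rewrite /Bcount C0 D0; split=> -[def /AD IAD /CB ICB].
Qed.

Lemma Bcount_ext fA fB fC fD gA gB gC gD :
  fA =1 gA -> fB =1 gB -> fC =1 gC -> fD =1 gD ->
  Bcount fA fB fC fD <-> Bcount gA gB gC gD.
Proof.
have imp (f1 f2 f3 f4 g1 g2 g3 g4 : nat -> nat) : f1 =1 g1 -> f2 =1 g2 -> f3 =1 g3 ->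
    f4 =1 g4 -> Bcount f1 f2 f3 f4 -> Bcount g1 g2 g3 g4.
  by move=> E1 E2 E3 E4 [def I1 I2]; split=> [|t|t]; rewrite -?E1 -?E2 -?E3 -?E4.
move=> A B C D; split; first exact: imp.
by apply: imp => t; rewrite ?A ?B ?C ?D.
Qed.

Lemma Bcount_sym fA fB fC fD : Bcount fA fB fC fD <-> Bcount fC fD fA fB.
Proof. by split=> -[def I1 I2]; split=> //; lia. Qed.

Definition swap (lo hi : nat) (C D : pred nat) : pred nat :=
  fun w => if (w == lo) || (w == hi) then D w else C w.

(* Throughout, lo < hi are the codes of the two entries of a consecutive pair,
   and [lo-1, hi] is the window of thresholds where their rows can matter. *)
Section Window.
Variables (K lo hi : nat).
Hypotheses (lo0 : 0 < lo) (lohi : lo < hi) (hiK : hi < K).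

Lemma swap_lo X Y : swap lo hi X Y lo = Y lo.
Proof. by rewrite /swap eqxx. Qed.

Lemma swap_hi X Y : swap lo hi X Y hi = Y hi.
Proof. by rewrite /swap eqxx orbT. Qed.

Lemma swap_out X Y w : w != lo -> w != hi -> swap lo hi X Y w = X w.
Proof. by rewrite /swap => /negbTE-> /negbTE->. Qed.

Lemma swap_mid X Y : (forall w, lo < w < hi -> ~~ X w) ->
  forall w, lo < w < hi -> ~~ swap lo hi X Y w.
Proof.
move=> Xmid w wm; have /andP[low whi] := wm.
by rewrite swap_out ?(Xmid w wm) ?(gtn_eqF low) ?(ltn_eqF whi).
Qed.

Lemma cnt_one_end X : (forall w, lo < w < hi -> ~~ X w) -> X lo != X hi ->
  cnt K X lo.-1 = (cnt K X hi).+1 /\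
  forall t, lo.-1 <= t <= hi -> cnt K X t = cnt K X hi \/ cnt K X t = cnt K X lo.-1.
Proof.
move=> Xmid; have W := cnt_window lo0 lohi hiK Xmid.
case: (X lo) (X hi) W => [] [] //= W _.
all: have Wlo : cnt K X lo.-1 = (cnt K X hi).+1 by rewrite W; lia.
all: split=> // t tw; rewrite Wlo W //; lia.
Qed.

Lemma cnt_no_end X : (forall w, lo <= w <= hi -> ~~ X w) ->
  forall t, lo.-1 <= t <= hi -> cnt K X t = cnt K X hi.
Proof.
move=> Xwin t tw; have Xmid w : lo < w < hi -> ~~ X w by move=> wm; apply: Xwin; lia.
rewrite (cnt_window lo0 lohi hiK Xmid tw) (negbTE (Xwin lo _)) ?(negbTE (Xwin hi _)) //; lia.
Qed.

Lemma cnt_no_end_inv X : cnt K X lo.-1 = cnt K X hi -> forall w, lo <= w <= hi -> ~~ X w.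
Proof. by move=> flat w wi; apply: (cnt_flat_inv flat); lia. Qed.

Lemma cnt_skip X w : ~~ X w -> 0 < w -> cnt K X w.-1 = cnt K X w.
Proof.
move=> Xw w0; rewrite (cnt_jump (t2 := w) (ws := [::])) ?addn0 //; first lia.
by move=> v vw; rewrite (_ : v = w) ?(negbTE Xw) //; lia.
Qed.

(* A row containing both codes lo and hi drops by two across the window, so it
   interlaces with no row having constant counts there. *)
Lemma two_ends_not_interlaced X Y : (forall w, lo < w < hi -> ~~ X w) -> X lo -> X hi ->
  (forall w, lo <= w <= hi -> ~~ Y w) ->
  ~ interlaced (cnt K X) (cnt K Y) /\ ~ interlaced (cnt K Y) (cnt K X).
Proof.
move=> Xmid Xlo Xhi Ywin.
have WX := cnt_window lo0 lohi hiK Xmid (t := lo.-1); rewrite Xlo Xhi in WX.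
have WY := cnt_no_end Ywin (t := lo.-1).
by split=> I; have := I lo.-1; have := I hi; rewrite WX ?WY //; lia.
Qed.

Lemma cnt_hi_agree X X' : (forall w, w != lo -> w != hi -> X' w = X w) ->
  cnt K X' hi = cnt K X hi.
Proof.
by move=> XX'; apply: cnt_eq_above => w hw; rewrite XX' ?gtn_eqF // (ltn_trans lohi hw).
Qed.

Lemma cnt_eq_out X X' : (forall w, w != lo -> w != hi -> X' w = X w) ->
  (forall w, lo < w < hi -> ~~ X w) -> X lo != X hi -> X' lo != X' hi ->
  forall t, (t < lo) || (hi <= t) -> cnt K X' t = cnt K X t.
Proof.
move=> XX' Xmid Xlh X'lh.
have X'mid w : lo < w < hi -> ~~ X' w.
  move=> wm; have /andP[low whi] := wm.
  by rewrite XX' ?(Xmid w wm) ?(gtn_eqF low) ?(ltn_eqF whi).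
move=> t /orP[tlo | hit]; last first.
  apply: cnt_eq_above => w tw; have hiw : hi < w := leq_ltn_trans hit tw.
  by rewrite XX' ?(gtn_eqF hiw) ?(gtn_eqF (ltn_trans lohi hiw)).
apply: (cnt_eq_below (t0 := lo.-1)); first by rewrite -ltnS prednK.
  by rewrite (cnt_one_end X'mid X'lh).1 (cnt_one_end Xmid Xlh).1 (cnt_hi_agree XX').
move=> w /andP[_ wlo]; have w_lo : w < lo by rewrite -(prednK lo0) ltnS.
by rewrite XX' ?ltn_eqF // (ltn_trans w_lo lohi).
Qed.

(* From now on C, D are the rows of a symbol on the Z' side, with lo and hi
   each in exactly one of them and nothing in between. *)
Variables C D : pred nat.
Hypothesis CD_mid : forall w, lo < w < hi -> ~~ C w && ~~ D w.
Hypothesis CD_lo : C lo != D lo.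
Hypothesis CD_hi : C hi != D hi.

Lemma C_mid w : lo < w < hi -> ~~ C w.
Proof. by case/CD_mid/andP. Qed.

Lemma D_mid w : lo < w < hi -> ~~ D w.
Proof. by case/CD_mid/andP. Qed.

Lemma Bcount_swap A B : (forall w, lo <= w <= hi -> ~~ A w && ~~ B w) ->
  Bcount (cnt K A) (cnt K B) (cnt K C) (cnt K D) <->
  Bcount (cnt K A) (cnt K B) (cnt K (swap lo hi C D)) (cnt K (swap lo hi D C)).
Proof.
move=> AB_win.
have A_win w : lo <= w <= hi -> ~~ A w by case/AB_win/andP.
have B_win w : lo <= w <= hi -> ~~ B w by case/AB_win/andP.
have C'_mid := swap_mid D C_mid; have D'_mid := swap_mid C D_mid.
have [same | diff] := eqVneq (C lo) (C hi).
  (* lo and hi in the same row of Lambda': some row drops by two, both sides fail *)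
  have [Dlo Dhi] : D lo = ~~ C lo /\ D hi = ~~ C lo.
    by move: CD_lo CD_hi; rewrite -same; case: (C lo) (D lo) (D hi) => [] [] [].
  split=> -[_ IAD ICB]; exfalso; case Clo: (C lo) in same Dlo Dhi.
  - exact: (two_ends_not_interlaced C_mid Clo (esym same) B_win).1 ICB.
  - exact: (two_ends_not_interlaced D_mid Dlo Dhi A_win).2 IAD.
  - have := two_ends_not_interlaced D'_mid (X := swap lo hi D C).
    by rewrite swap_lo swap_hi Clo -same => /(_ _ isT isT A_win) [_]; apply.
  - have := two_ends_not_interlaced C'_mid (X := swap lo hi C D).
    by rewrite swap_lo swap_hi Dlo Dhi => /(_ _ isT isT B_win) [+ _]; apply.
(* lo and hi in different rows: outside the window the counts do not change,
   inside they take the same two values *)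
have Dlh : D lo != D hi.
  by move: CD_lo CD_hi diff; case: (C lo) (C hi) (D lo) (D hi) => [] [] [] [].
have C'lh : swap lo hi C D lo != swap lo hi C D hi by rewrite swap_lo swap_hi.
have D'lh : swap lo hi D C lo != swap lo hi D C hi by rewrite swap_lo swap_hi.
have C'_out := cnt_eq_out (swap_out C D) C_mid diff C'lh.
have D'_out := cnt_eq_out (swap_out D C) D_mid Dlh D'lh.
have [_ C_vals] := cnt_one_end C_mid diff; have [_ D_vals] := cnt_one_end D_mid Dlh.
have [_ C'_vals] := cnt_one_end C'_mid C'lh; have [_ D'_vals] := cnt_one_end D'_mid D'lh.
have lohi' : lo <= hi := ltnW lohi.
apply: Bcount_iff; rewrite ?C'_out ?D'_out ?lo0 //.
  exact: (rel_window_iff (fun a d => d <= a <= d.+1) lo0 lohi' (cnt_no_end A_win)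
            D'_out D_vals D'_vals).
exact: (rel_window_iff (fun b c => b <= c <= b.+1) lo0 lohi' (cnt_no_end B_win)
          C'_out C_vals C'_vals).
Qed.

Lemma Bcount_swap_gap A B : C lo != C hi ->
  interlaced (cnt K A) (cnt K B) -> interlaced (cnt K C) (cnt K D) ->
  ~~ A lo -> ~~ A hi -> ~~ B lo -> ~~ B hi ->
  Bcount (cnt K A) (cnt K B) (cnt K (swap lo hi C D)) (cnt K (swap lo hi D C)) ->
  forall w, lo <= w <= hi -> ~~ A w && ~~ B w.
Proof.
move=> diff IAB ICD Alo Ahi Blo Bhi [_ IAD' IC'B].
have [t1 t2 t3] : [/\ lo.-1 <= lo.-1 <= hi, lo.-1 <= lo <= hi & lo.-1 <= hi.-1 <= hi].
  by clear -lo0 lohi; split; lia.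
suff [A_flat B_flat] : cnt K A lo.-1 = cnt K A hi /\ cnt K B lo.-1 = cnt K B hi.
  by move=> w wi; rewrite (cnt_no_end_inv A_flat) ?(cnt_no_end_inv B_flat).
have A_lo := cnt_skip Alo lo0; have A_hi := cnt_skip Ahi (ltn_trans lo0 lohi).
have B_lo := cnt_skip Blo lo0; have B_hi := cnt_skip Bhi (ltn_trans lo0 lohi).
have A_mono : cnt K A hi <= cnt K A lo := cnt_mono K A (ltnW lohi).
have B_mono : cnt K B hi <= cnt K B lo := cnt_mono K B (ltnW lohi).
have WC := cnt_window lo0 lohi hiK C_mid; have WD := cnt_window lo0 lohi hiK D_mid.
have WC' := cnt_window lo0 lohi hiK (swap_mid D C_mid).
have WD' := cnt_window lo0 lohi hiK (swap_mid C D_mid).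
rewrite !swap_lo !swap_hi !(cnt_hi_agree (swap_out _ _)) in WC' WD'.
have [Dlo Dhi] : D lo = ~~ C lo /\ D hi = C lo.
  by move: CD_lo CD_hi diff; case: (C lo) (C hi) (D lo) (D hi) => [] [] [] [].
(* the interlacing conditions at lo-1, lo, hi-1, hi then pin the counts of Z *)
move: (ICD lo) (ICD hi) (IAD' lo) (IAD' hi.-1) (IC'B lo.-1) (IC'B lo) (IC'B hi.-1).
move: (IAB lo) (IAB hi).
rewrite (WC _ t2) (WD _ t2) (WD' _ t2) (WD' _ t3) (WC' _ t1) (WC' _ t2) (WC' _ t3) Dlo Dhi.
clear -A_lo A_hi B_lo B_hi A_mono B_mono lo0 lohi diff.
by case: (C lo) diff; rewrite /= ?A_hi -?A_lo -?B_hi ?B_lo; lia.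
Qed.

End Window.

Definition weakly_interlaced (X Y : seq nat) : Prop :=
  [/\ strict_decr X, strict_decr Y, size Y <= size X <= (size Y).+1 &
      forall i, 1 <= i <= size Y -> ent Y i <= ent X i /\ ent X i.+1 <= ent Y i].

Lemma special_def1_weak a b : special_def1 a b -> weakly_interlaced a b.
Proof. by case=> sa sb Sab ab; split=> //; rewrite Sab leqnSn leqnn. Qed.

Lemma special_def0_weak c d : special_def0 c d -> weakly_interlaced c d.
Proof. by case=> sc sd Scd cd; split=> //; rewrite Scd leqnn leqnSn. Qed.

Lemma weakly_interlaced_above f X Y : {mono f : u v / u < v} ->
  weakly_interlaced X Y -> interlaced (above f X) (above f Y).
Proof.
move=> f_mono [sX sY /andP[sYX sXY] XY].
have f_le := leq_mono (mono2W f_mono).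
apply: interlaced_of_le => // i iS.
  by rewrite f_le (XY i iS).1 andbT /has_ent; lia.
have /XY[_] : 1 <= i.-1 <= size Y by lia.
by rewrite prednK ?f_le => [->|]; rewrite ?andbT /has_ent; lia.
Qed.

Lemma consecutive_gap X Y k l v : weakly_interlaced X Y ->
  has_ent X k -> has_ent Y l -> (l == k.-1) || (l == k) -> (v \in X) || (v \in Y) ->
  (v <= minn (ent X k) (ent Y l)) || (maxn (ent X k) (ent Y l) <= v).
Proof.
move=> [sX sY /andP[sYX sXY] XY] /andP[k0 kX] /andP[l0 lY] kl /orP[vX | vY].
(* compare v = X_j or v = Y_j with X_k and Y_l along X_1 >= Y_1 >= X_2 >= ... *)
- have [j /andP[j0 jX] ->] := ent_index vX.
  case/orP: kl => /eqP El; subst l.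
  + have [_] := XY k.-1 (ltac:(lia)); rewrite prednK // => Xk_le.
    have [kj | jk] := leqP k j; first by have := ent_decr sX k0 kj jX; lia.
    have [Yj_le _] := XY j (ltac:(lia)).
    by have := ent_decr sY j0 (ltac:(lia) : j <= k.-1) lY; lia.
  + have [Yk_le Xk1_le] := XY k (ltac:(lia)).
    have [jk | kj] := leqP j k; first by have := ent_decr sX j0 jk kX; lia.
    by have := ent_decr sX (ltn0Sn k) kj jX; lia.
- have [j /andP[j0 jY] ->] := ent_index vY.
  case/orP: kl => /eqP El; subst l.
  + have [_] := XY k.-1 (ltac:(lia)); rewrite prednK // => Xk_le.
    have [jk | kj] := leqP j k.-1; first by have := ent_decr sY j0 jk lY; lia.
    have [Yj_le _] := XY j (ltac:(lia)).
    by have := ent_decr sX k0 (ltac:(lia) : k <= j) (leq_trans jY sYX); lia.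
  + have [Yk_le _] := XY k (ltac:(lia)).
    have [kj | jk] := leqP k j; first by have := ent_decr sY l0 kj jY; lia.
    have [_ Xj1_le] := XY j (ltac:(lia)).
    by have := ent_decr sX (ltn0Sn j) jk kX; lia.
Qed.

Lemma cons_pair_ends X Y P : weakly_interlaced X Y -> cons_pair X Y P ->
  exists u v, [/\ u < v, P =1 pred2 u v,
    [/\ (u \in X) != (u \in Y), (v \in X) != (v \in Y) & (u \in X) != (v \in X)] &
    forall w, (w \in X) || (w \in Y) -> (w <= u) || (v <= w)].
Proof.
move=> XY [k [l [/andP[Xk Yl] kl Sx Sy P_xy]]].
have gap := consecutive_gap XY Xk Yl kl.
move: Sx Sy P_xy gap; rewrite /singles /=.
have xX := ent_mem Xk; have yY := ent_mem Yl.
set x := ent X k in xX *; set y := ent Y l in yY *.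
rewrite xX yY => nxY nyX P_xy gap.
have xY : (x \in Y) = false by move: nxY; case: (x \in Y).
have yX : (y \in X) = false by move: nyX; case: (y \in X).
have [xy | yx | exy] := ltngtP x y.
- exists x, y; split; rewrite ?xX ?yX ?yY ?xY //.
  by move=> w /gap; rewrite (minn_idPl (ltnW xy)) (maxn_idPr (ltnW xy)).
- exists y, x; split; rewrite ?xX ?yX ?yY ?xY //.
  + by move=> w; rewrite P_xy /= orbC.
  + by move=> w /gap; rewrite (minn_idPr (ltnW yx)) (maxn_idPl (ltnW yx)).
- by move: xY; rewrite exy yY.
Qed.

Lemma mem_move1 (M : pred nat) X Y v :
  (v \in (move M (X, Y)).1) = if M v then v \in Y else v \in X.
Proof. by rewrite /move /= mem_sort mem_cat !mem_filter; case: (M v); rewrite ?orbF. Qed.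

Lemma mem_move2 (M : pred nat) X Y v :
  (v \in (move M (X, Y)).2) = if M v then v \in X else v \in Y.
Proof. by rewrite /move /= mem_sort mem_cat !mem_filter; case: (M v); rewrite ?orbF. Qed.

Lemma strict_decr_sort s : uniq s -> strict_decr (sort (fun x y => y <= x) s).
Proof. by move=> us; have := @Order.TotalTheory.sort_lt_sorted _ nat^d s; rewrite us. Qed.

(* [L] has strictly decreasing rows, the entries of [Z], and as many of them;
   every element of bar S_Z is such a rearrangement. *)
Definition rearranges (Z L : symbol) : Prop :=
  [/\ strict_decr L.1, strict_decr L.2, size L.1 + size L.2 = size Z.1 + size Z.2 &
      forall v, (v \in L.1) || (v \in L.2) -> (v \in Z.1) || (v \in Z.2)].

Lemma rearranges_refl X Y : strict_decr X -> strict_decr Y -> rearranges (X, Y) (X, Y).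
Proof. by move=> sX sY; split. Qed.

Lemma rearranges_move (M : pred nat) X Y : strict_decr X -> strict_decr Y ->
  rearranges (X, Y) (move M (X, Y)).
Proof.
move=> sX sY; have uX := strict_decr_uniq sX; have uY := strict_decr_uniq sY.
have u_rows (X1 Y1 : seq nat) (P : pred nat) : uniq X1 -> uniq Y1 ->
    uniq ([seq x <- X1 | ~~ P x] ++ [seq x <- Y1 | P x]).
  move=> u1 u2; rewrite cat_uniq !filter_uniq // andbT /=.
  by apply/hasP => -[v]; rewrite !mem_filter => /andP[-> _] /andP[/negP].
split; try exact/strict_decr_sort/u_rows.
  have cX : count (fun x => M x) X + count (fun x => ~~ M x) X = size X := count_predC M X.
  have cY : count (fun x => M x) Y + count (fun x => ~~ M x) Y = size Y := count_predC M Y.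
  by rewrite /move /= !size_sort !size_cat !size_filter; lia.
by move=> v; rewrite mem_move1 mem_move2 /=; case: (M v) => /orP[]->; rewrite ?orbT.
Qed.

Lemma mono_injective f : {mono f : u v / u < v} -> injective f.
Proof. by move=> f_mono; exact/incn_inj/leq_mono/mono2W. Qed.

Definition coded (f : nat -> nat) (s : seq nat) : pred nat := fun w => w \in map f s.

Lemma coded_code f s v : injective f -> coded f s (f v) = (v \in s).
Proof. by move=> f_inj; rewrite /coded mem_map. Qed.

Lemma coded_other (f g : nat -> nat) s v : (forall u, f u != g v) -> coded f s (g v) = false.
Proof. by move=> fg; apply/negbTE/mapP => -[u _ /eqP]; rewrite eq_sym (negbTE (fg u)). Qed.

Lemma above_cnt K f s : injective f -> uniq s -> (forall v, v \in s -> f v < K) ->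
  forall t, above f s t = cnt K (coded f s) t.
Proof.
move=> f_inj us sK t; rewrite /above /cnt -(count_map f (fun w => t < w)).
have perm_codes : perm_eq (map f s) [seq w <- iota 0 K | coded f s w].
  apply: uniq_perm; rewrite ?map_inj_uniq ?filter_uniq ?iota_uniq //.
  by move=> w; rewrite mem_filter mem_iota /= andb_idr // => /mapP[v vs ->]; exact: sK.
by rewrite (permP perm_codes) count_filter; apply: eq_count => w; rewrite andbC.
Qed.

Lemma coded_swap f X Y X' u v : injective f ->
  (forall w, (w \in X') = if (w == u) || (w == v) then w \in Y else w \in X) ->
  coded f X' =1 swap (f u) (f v) (coded f X) (coded f Y).
Proof.
move=> f_inj X'E w; rewrite /swap.
have [/orP[]/eqP-> | nuv] := boolP ((w == f u) || (w == f v)).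
- by rewrite !coded_code // X'E eqxx.
- by rewrite !coded_code // X'E eqxx orbT.
apply/mapP/mapP => -[z zs wE]; exists z => //; move: zs; rewrite X'E.
all: suff -> : (z == u) || (z == v) = false by [].
all: by apply/negbTE; apply: contra nuv; rewrite wE => /orP[]/eqP->; rewrite eqxx ?orbT.
Qed.

Lemma weakly_interlaced_cnt K f X Y : {mono f : u v / u < v} -> weakly_interlaced X Y ->
  (forall v, (v \in X) || (v \in Y) -> f v < K) ->
  interlaced (cnt K (coded f X)) (cnt K (coded f Y)).
Proof.
move=> f_mono XY XYK t; have [sX sY _ _] := XY.
have f_inj := mono_injective f_mono.
have XK v : v \in X -> f v < K by move=> vX; apply: XYK; rewrite vX.
have YK v : v \in Y -> f v < K by move=> vY; apply: XYK; rewrite vY orbT.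
rewrite -(above_cnt f_inj (strict_decr_uniq sX) XK) -(above_cnt f_inj (strict_decr_uniq sY) YK).
exact: weakly_interlaced_above.
Qed.

Lemma coded_move_pair f X Y P u v : injective f -> P =1 pred2 u v ->
  coded f (move P (X, Y)).1 =1 swap (f u) (f v) (coded f X) (coded f Y) /\
  coded f (move P (X, Y)).2 =1 swap (f u) (f v) (coded f Y) (coded f X).
Proof.
by move=> f_inj P_uv; split; apply: coded_swap => // w; rewrite ?mem_move1 ?mem_move2 P_uv.
Qed.

Lemma coded_move_symdiff f X Y N P u v : injective f -> P =1 pred2 u v ->
  coded f (move (symdiff N P) (X, Y)).1 =1
    swap (f u) (f v) (coded f (move N (X, Y)).1) (coded f (move N (X, Y)).2) /\
  coded f (move (symdiff N P) (X, Y)).2 =1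
    swap (f u) (f v) (coded f (move N (X, Y)).2) (coded f (move N (X, Y)).1).
Proof.
move=> f_inj P_uv; split; apply: coded_swap => // w.
all: by rewrite !mem_move1 ?mem_move2 /symdiff P_uv /=; case: (N w); case: (_ || _).
Qed.

Lemma coded_sub f S X Y w : (forall z, z \in S -> (z \in X) || (z \in Y)) ->
  coded f S w -> coded f X w || coded f Y w.
Proof.
move=> SXY /mapP[z /SXY /orP[zXY|zXY] ->]; by rewrite /coded (map_f f zXY) ?orbT.
Qed.


Lemma code_bound (a b c d : seq nat) : exists K,
  (forall m m' v, (v \in a) || (v \in b) -> codeZ m m' v < K) /\
  (forall m m' v, (v \in c) || (v \in d) -> codeZ' m m' v < K).
Proof.
pose K := (\max_(v <- a ++ b ++ c ++ d) v).*2.+3.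
have below v : v \in a ++ b ++ c ++ d -> v.*2.+2 < K.
  by move=> vs; rewrite /K !ltnS leq_double (leq_bigmax_seq _ vs).
exists K; split=> m m' v vZ; [apply: leq_ltn_trans (codeZ_le m m' v) (below v _)
                             | apply: leq_ltn_trans (codeZ'_le m m' v) (below v _)].
all: by rewrite !mem_cat; case/orP: vZ => ->; rewrite ?orbT.
Qed.

Definition Bcoded K (f f' : nat -> nat) (L L' : symbol) : Prop :=
  Bcount (cnt K (coded f L.1)) (cnt K (coded f L.2))
         (cnt K (coded f' L'.1)) (cnt K (coded f' L'.2)).

Lemma Bcoded_sym K f f' L L' : Bcoded K f f' L L' <-> Bcoded K f' f L' L.
Proof. exact: Bcount_sym. Qed.

Lemma Bplus_coded K a b c d (L L' : symbol) :
  special_def1 a b -> special_def0 c d -> (size c = size b \/ size c = (size b).+1) ->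
  (forall v, (v \in a) || (v \in b) -> codeZ (size b) (size c) v < K) ->
  (forall v, (v \in c) || (v \in d) -> codeZ' (size b) (size c) v < K) ->
  rearranges (a, b) L -> rearranges (c, d) L' ->
  BplusZ a b c d L L' <-> Bcoded K (codeZ (size b) (size c)) (codeZ' (size b) (size c)) L L'.
Proof.
case: L L' => [a' b'] [c' d'] [_ _ Sab _] [_ _ Scd _] Hm ZK Z'K.
case=> /= sa sb S inZ [/= sc sd S' inZ'].
apply: (iff_trans (Bplus_count Hm sa sb sc sd _ _)); [lia | lia | ].
have inj := mono_injective (codeZ_mono (size b) (size c)).
have inj' := mono_injective (codeZ'_mono (size b) (size c)).
by apply: Bcount_ext; apply: above_cnt; rewrite ?strict_decr_uniq // => v vL;
  [apply/ZK/inZ | apply/ZK/inZ | apply/Z'K/inZ' | apply/Z'K/inZ']; rewrite vL ?orbT.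
Qed.

(* Let Psi' = {u, v} be a consecutive pair of Z' with
   (Z, Z'_Psi') related: then Z has no code in [f u, f v], and toggling Psi'
   in any Lambda'_N does not change its relation with any Lambda_M. *)
Lemma Bcoded_toggle K fZ fT (p q r s : seq nat) (M N P : pred nat) :
  {mono fZ : u v / u < v} -> {mono fT : u v / u < v} ->
  (forall u v, fZ u != fT v) -> (forall v, 0 < fT v) ->
  weakly_interlaced p q -> weakly_interlaced r s ->
  (forall v, (v \in p) || (v \in q) -> fZ v < K) ->
  (forall v, (v \in r) || (v \in s) -> fT v < K) ->
  cons_pair r s P -> Bcoded K fZ fT (p, q) (move P (r, s)) ->
  Bcoded K fZ fT (move M (p, q)) (move N (r, s)) <->
  Bcoded K fZ fT (move M (p, q)) (move (symdiff N P) (r, s)).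
Proof.
move=> fZ_mono fT_mono fZT fT_pos pq rs pqK rsK.
case/(cons_pair_ends rs) => u [v [uv P_uv [u_row v_row uv_row] gap]] BP.
have fT_inj := mono_injective fT_mono.
have lohi : fT u < fT v by rewrite fT_mono.
have hiK : fT v < K by apply: rsK; move: v_row; case: (v \in r); case: (v \in s).
have mid S : (forall w, w \in S -> (w \in r) || (w \in s)) ->
    forall w, fT u < w < fT v -> ~~ coded fT S w.
  by move=> Ss w wm; apply/mapP => -[z /Ss/gap zE wE]; move: wm zE; rewrite wE !fT_mono; lia.
have rs_mid w : fT u < w < fT v -> ~~ coded fT r w && ~~ coded fT s w.
  by move=> wm; rewrite !mid // => z ->; rewrite ?orbT.
have Zgap : forall w, fT u <= w <= fT v -> ~~ coded fZ p w && ~~ coded fZ q w.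
  have [Pr Ps] := coded_move_pair r s fT_inj P_uv.
  apply: (Bcount_swap_gap (fT_pos u) lohi hiK rs_mid); rewrite ?coded_code ?coded_other //.
  - exact: weakly_interlaced_cnt pq pqK.
  - exact: weakly_interlaced_cnt rs rsK.
  - exact: (Bcount_ext (frefl _) (frefl _) (cnt_ext K Pr) (cnt_ext K Ps)).1 BP.
have [sp sq _ _] := pq; have [sr ss _ _] := rs.
have [_ _ _ sub_pq] := rearranges_move M sp sq.
have [_ _ _ sub_rs] := rearranges_move N sr ss.
have [Nr Ns] := coded_move_symdiff r s N fT_inj P_uv.
apply: (iff_trans _ (iff_sym (Bcount_ext (frefl _) (frefl _) (cnt_ext K Nr) (cnt_ext K Ns)))).
apply: (Bcount_swap (fT_pos u) lohi hiK).
- by move=> w wm; rewrite !mid // => z zS; apply: sub_rs; rewrite zS ?orbT.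
- by rewrite !coded_code // mem_move1 mem_move2; case: (N u); rewrite // eq_sym.
- by rewrite !coded_code // mem_move1 mem_move2; case: (N v); rewrite // eq_sym.
- move=> w /Zgap /andP[/negPf wp /negPf wq].
  have notZ S : (forall z, z \in S -> (z \in p) || (z \in q)) -> ~~ coded fZ S w.
    by move=> Spq; apply/negP => /(coded_sub Spq); rewrite wp wq.
  by rewrite !notZ // => z zS; apply: sub_pq; rewrite zS ?orbT.
Qed.

Theorem lemma0808 (a b c d : seq nat) :
  special_def1 a b -> special_def0 c d ->
  (size c = size b \/ size c = (size b).+1) ->
  (exists L L', inD a b c d L L') ->
  forall (M N : pred nat),
    subpred M (singles (a, b)) -> subpred N (singles (c, d)) ->
    (forall P' : pred nat, cons_pair c d P' ->
        inD a b c d (a, b) (move P' (c, d)) ->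
        (BplusZ a b c d (move M (a, b)) (move N (c, d)) <->
         BplusZ a b c d (move M (a, b)) (move (symdiff N P') (c, d)))) /\
    (forall P : pred nat, cons_pair a b P ->
        inD a b c d (move P (a, b)) (c, d) ->
        (BplusZ a b c d (move M (a, b)) (move N (c, d)) <->
         BplusZ a b c d (move (symdiff M P) (a, b)) (move N (c, d)))).
Proof.
move=> Zs Z's Hm _ M N _ _.
have [K [ZK Z'K]] := code_bound a b c d.
have E := Bplus_coded Zs Z's Hm (ZK _ _) (Z'K _ _).
have Zw := special_def1_weak Zs; have Z'w := special_def0_weak Z's.
have [sa sb _ _] := Zw; have [sc sd _ _] := Z'w.
split=> [P' P'_pair [_ _ _ _ BP'] | P P_pair [_ _ _ _ BP]].
-
  move/E: BP' => /(_ (rearranges_refl sa sb) (rearranges_move P' sc sd)) BP'.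
  rewrite !E; try exact: rearranges_move.
  exact: Bcoded_toggle (codeZ_mono _ _) (codeZ'_mono _ _) (@codeZ_neq _ _) (codeZ'_pos _ _)
           Zw Z'w (ZK _ _) (Z'K _ _) P'_pair BP'.
- (* a consecutive pair of Z: the same with the two symbols exchanged *)
  move/E: BP => /(_ (rearranges_move P sa sb) (rearranges_refl sc sd)) /Bcoded_sym BP.
  rewrite !E; try exact: rearranges_move.
  rewrite Bcoded_sym [X in _ <-> X]Bcoded_sym.
  exact: Bcoded_toggle (codeZ'_mono _ _) (codeZ_mono _ _) (@codeZ'_neq _ _) (codeZ_pos _ _)
           Z'w Zw (Z'K _ _) (ZK _ _) P_pair BP.
Qed.
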